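(* Let $\mu>0$, let $V^{*}_{\mu}$ be the fixed point of $\mathcal{B}_{\mu}$, $Q^{*}_{\mu}(s,a)=\mathbb{E}_{S'\sim\mathbf{P}(\cdot\mid s,a)}[R(S',s,a)+\gamma V^{*}_{\mu}(S')]$, and let the induced (maximizing) policy $\pi^{*}_{\mu}$ satisfy $\pi^{*}_{\mu}(a\mid s)\le\mathbf{C}$. Let $\mathcal{W}_{s}=\{a:\mathbf{C}>\pi^{*}_{\mu}(a\mid s)>0\}$ and suppose $\{a:\pi^{*}_{\mu}(a\mid s)=\mathbf{C}\}$ has Lebesgue measure $0$. Then $$\mathcal{B}_{\mu}V^{*}_{\mu}(s)=\mu-\frac{1}{4\mu}\left(\frac{\big(\int_{\mathcal{W}_s}Q^{*}_{\mu}(s,a')\,da'-2\mu\big)^2}{\sigma(\mathcal{W}_s)}-\int_{\mathcal{W}_s}Q^{*}_{\mu}(s,a)^2\,da\right).$$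
   Context: Markov decision process with state space $\mathcal{S}$, action space $\mathcal{A}\subseteq\mathbb{R}$ ($\sigma$ = Lebesgue measure), transition kernel $\mathbf{P}$, bounded reward $R(s',s,a)$, discount $\gamma\in[0,1)$. $\Pi_{\mathbf{C}}$ is the class of conditional densities on $\mathcal{A}$ bounded by $\mathbf{C}$. For bounded $V$, $Q_V(s,a)=\mathbb{E}_{S'\sim\mathbf{P}(\cdot\mid s,a)}[R(S',s,a)+\gamma V(S')]$ and $\mathcal{B}_{\mu}V(s)=\sup_{\pi\in\Pi_{\mathbf{C}}}\int_{\mathcal{A}}[Q_V(s,a)\pi(a\mid s)+\mu(\pi(a\mid s)-\pi(a\mid s)^2)]\,da$; the induced policy $\pi^{*}_{\mu}(\cdot\mid s)$ is the density attaining this supremum for $V=V^{*}_{\mu}$. *)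

From HB Require Import structures.
From mathcomp Require Import all_boot all_order all_algebra.
From mathcomp Require Import all_classical all_reals all_analysis.
Set Implicit Arguments. Unset Strict Implicit. Unset Printing Implicit Defensive.
Import Order.TTheory GRing.Theory Num.Theory.
Import numFieldNormedType.Exports.
Local Open Scope classical_set_scope.
Local Open Scope ring_scope.

Definition Qfun {d} {S : measurableType d} {R : realType}
  (P : R.-pker (S * R)%type ~> S) (Rew : S -> S -> R -> R) (gamma : R)
  (V : S -> R) (s : S) (a : R) : R :=
  Rintegral (P (s, a)) setT (fun s' => Rew s' s a + gamma * V s').

Definition density_on {R : realType} (A : set R) (C : R) (p : R -> R) : Prop :=
  [/\ measurable_fun A p,
      (forall a, A a -> 0 <= p a <= C) &
      (\int[@lebesgue_measure R]_(a in A) (p a)%:E = 1)%E].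

Definition PiC {d} {S : measurableType d} {R : realType} (A : set R) (C : R)
  : set (S -> R -> R) :=
  [set pi | measurable_fun (setT `*` A) (fun x : S * R => pi x.1 x.2) /\
            forall s, density_on A C (pi s)].

Definition objective {d} {S : measurableType d} {R : realType}
  (P : R.-pker (S * R)%type ~> S) (Rew : S -> S -> R -> R) (gamma mu : R)
  (A : set R) (V : S -> R) (s : S) (p : R -> R) : R :=
  Rintegral (@lebesgue_measure R) A
    (fun a => Qfun P Rew gamma V s a * p a + mu * (p a - p a ^+ 2)).

Definition Bmu {d} {S : measurableType d} {R : realType}
  (P : R.-pker (S * R)%type ~> S) (Rew : S -> S -> R -> R) (gamma mu : R)
  (A : set R) (C : R) (V : S -> R) (s : S) : R :=
  sup [set objective P Rew gamma mu A V s (pi s) | pi in PiC A C].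

From HB Require Import structures.
From mathcomp Require Import all_boot all_order all_algebra.
From mathcomp Require Import all_classical all_reals all_analysis.
From mathcomp Require Import ring lra measurable_realfun.
Import Order.TTheory GRing.Theory Num.Theory.
Import numFieldNormedType.Exports.
Local Open Scope classical_set_scope.
Local Open Scope ring_scope.

Set Implicit Arguments. Unset Strict Implicit. Unset Printing Implicit Defensive.

(* Write p for pi*_mu(.|s) and J(q) = int_A Q q + mu (q - q^2) for the value of a
   density q bounded by C, so that p maximises J. Let m be the (C - p) p-weighted
   mean of Q - 2 mu p. The direction psi = (C - p) (Q - 2 mu p - m) has p-mean 0,
   so q = p (1 + t psi) is again an admissible density for small t > 0, and
   J(q) - J(p) = t int (C - p) (Q - 2 mu p - m)^2 p + O(t^2); maximality of p
   makes this integral vanish. Hence p = (Q - m) / (2 mu) a.e. on W, while p = 0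
   a.e. on A \ W because {p = C} is null. The constraint int p = 1 then reads
   m sigma(W) = int_W Q - 2 mu, and substituting p into J gives the formula. *)

Lemma bounded_near_le (T : Type) (R : realType) (D : set T) (f : T -> R) M :
  (forall x, D x -> `|f x| <= M) -> [bounded f x | x in D].
Proof.
move=> fM; rewrite /bounded_near; near=> M' => x Dx /=.
apply: le_trans (fM x Dx) _; near: M'; exact/nbhs_pinfty_ge/num_real.
Unshelve. all: end_near. Qed.

Section solve_bounded_measurable.
Context d (T : measurableType d) (R : realType) (D : set T).

Definition bounded_measurable (f : T -> R) :=
  measurable_fun D f /\ exists M, forall x, D x -> `|f x| <= M.

Lemma bounded_measurable_measurable f : bounded_measurable f -> measurable_fun D f.
Proof. by case. Qed.

Lemma bounded_measurable_cst c : bounded_measurable (fun=> c).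
Proof. by split => //; exists `|c|. Qed.

Lemma bounded_measurableD f g : bounded_measurable f -> bounded_measurable g ->
  bounded_measurable (fun x => f x + g x).
Proof.
move=> [mf [M1 fM]] [mg [M2 gM]]; split; first exact: measurable_funD.
exists (M1 + M2) => x Dx; apply: le_trans (ler_normD _ _) _.
by apply: lerD; [exact: fM | exact: gM].
Qed.

Lemma bounded_measurableN f : bounded_measurable f ->
  bounded_measurable (fun x => - f x).
Proof.
move=> [mf [M fM]]; split; first exact: measurable_funN.
by exists M => x Dx; rewrite normrN; exact: fM.
Qed.

Lemma bounded_measurableB f g : bounded_measurable f -> bounded_measurable g ->
  bounded_measurable (fun x => f x - g x).
Proof. by move=> bf bg; apply: bounded_measurableD => //; exact: bounded_measurableN. Qed.

Lemma bounded_measurableM f g : bounded_measurable f -> bounded_measurable g ->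
  bounded_measurable (fun x => f x * g x).
Proof.
move=> [mf [M1 fM]] [mg [M2 gM]]; split; first exact: measurable_funM.
exists (M1 * M2) => x Dx; rewrite normrM.
by apply: ler_pM => //; [exact: fM | exact: gM].
Qed.

Lemma bounded_measurableX f n : bounded_measurable f ->
  bounded_measurable (fun x => f x ^+ n).
Proof.
move=> bf; elim: n => [|n bfn]; first exact: bounded_measurable_cst.
by under eq_fun do rewrite exprS; exact: bounded_measurableM.
Qed.

Lemma bounded_measurable_integrable (mu : {measure set T -> \bar R}) f :
  measurable D -> (mu D < +oo)%E -> bounded_measurable f ->
  mu.-integrable D (EFin \o f).
Proof.
by move=> mD Dfin [mf [M fM]]; exact: measurable_bounded_integrable (bounded_near_le fM).
Qed.

End solve_bounded_measurable.

Lemma bounded_measurableS d (T : measurableType d) (R : realType) (D D' : set T)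
    (f : T -> R) :
  measurable D -> D' `<=` D -> bounded_measurable D f -> bounded_measurable D' f.
Proof.
move=> mD D'D [mf [M fM]]; split; first exact: measurable_funS mf.
by exists M => x /D'D; exact: fM.
Qed.

Ltac solve_bounded_measurable := repeat first
  [ assumption
  | apply: bounded_measurable_cst
  | apply: bounded_measurableD
  | apply: bounded_measurableB
  | apply: bounded_measurableM
  | apply: bounded_measurableN
  | apply: bounded_measurableX ].

Section Rintegral_complements.
Context d (T : measurableType d) (R : realType) (mu : {measure set T -> \bar R}).

Lemma Rintegral_eq0_ae D (f : T -> R) : measurable D ->
  mu.-integrable D (EFin \o f) -> (forall x, D x -> 0 <= f x) ->
  \int[mu]_(x in D) f x = 0 -> {ae mu, forall x, D x -> f x = 0}.
Proof.
move=> mD fi f0 If0.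
have abs_f0 : (\int[mu]_(x in D) `|(EFin \o f) x|)%E = 0%E.
  under eq_integral => x /[!inE] Dx do rewrite /= ger0_norm ?f0//.
  rewrite -[LHS]fineK; last exact: integrable_fin_num fi.
  by rewrite -[fine _]/(\int[mu]_(x in D) f x) If0.
have := (ae_eq_integral_abs mu mD (measurable_int _ fi)).1 abs_f0.
by apply: filterS => x fx0 Dx; case: (fx0 Dx).
Qed.

Lemma ae_eq_Rintegral D (f g : T -> R) : measurable D ->
  measurable_fun D f -> measurable_fun D g ->
  {ae mu, forall x, D x -> f x = g x} ->
  \int[mu]_(x in D) f x = \int[mu]_(x in D) g x.
Proof.
move=> mD mf mg fg; congr fine; apply: ae_eq_integral => //.
- exact/measurable_EFinP.
- exact/measurable_EFinP.
- by apply: filterS fg => x fgx Dx; rewrite /= fgx.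
Qed.

Lemma Rintegral_quadratic D (f : T -> R) x y z :
  measurable D -> (mu D < +oo)%E -> bounded_measurable D f ->
  \int[mu]_(a in D) (x * f a ^+ 2 + y * f a + z) =
  x * \int[mu]_(a in D) f a ^+ 2 + y * \int[mu]_(a in D) f a + z * fine (mu D).
Proof.
move=> mD Dfin bf.
have int g : bounded_measurable D g -> mu.-integrable D (EFin \o g).
  exact: bounded_measurable_integrable.
rewrite !RintegralD//; try by apply: int; solve_bounded_measurable.
by rewrite !RintegralZl ?Rintegral_cst//; apply: int; solve_bounded_measurable.
Qed.

End Rintegral_complements.

(* The library's hint fails to infer this instance for the Lebesgue measure. *)
#[local] Instance lebesgue_ae_filter (R : realType) :
  Filter (nbhs (almost_everywhere (@lebesgue_measure R))).
Proof. exact: (@ae_filter_ringOfSetsType _ _ R (@lebesgue_measure R)). Qed.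

Section Qfun.
Context d (S : measurableType d) (R : realType) (P : R.-pker (S * R)%type ~> S).
Variables (Rew : S -> S -> R -> R) (gamma : R) (V : S -> R) (MR MV : R).
Hypothesis mRew : measurable_fun setT (fun x : S * (S * R) => Rew x.1 x.2.1 x.2.2).
Hypothesis mV : measurable_fun setT V.
Hypothesis RewM : forall s' s a, `|Rew s' s a| <= MR.
Hypothesis VM : forall s, `|V s| <= MV.

Let integrand (x : (S * R) * S) := Rew x.2 x.1.1 x.1.2 + gamma * V x.2.
Let M := MR + `|gamma| * MV.

Let integrandM x : `|integrand x| <= M.
Proof.
apply: le_trans (ler_normD _ _) _; apply: lerD => //.
by rewrite normrM ler_wpM2l.
Qed.

Let measurable_integrand : measurable_fun setT integrand.
Proof.
apply: measurable_funD; last by apply: measurable_funM => //; exact: measurableT_comp.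
have -> : (fun x => Rew x.2 x.1.1 x.1.2) =
    (fun x : S * (S * R) => Rew x.1 x.2.1 x.2.2) \o @unstable.swap _ _ by [].
by apply: measurableT_comp mRew _; exact: measurable_swap.
Qed.

Let integrable_integrand x : (P x).-integrable setT (EFin \o (fun y => integrand (x, y))).
Proof.
apply: bounded_measurable_integrable; rewrite ?prob_kernel ?ltry//.
split; first exact: measurableT_comp measurable_integrand (pair1_measurable x).
by exists M => y _; exact: integrandM.
Qed.

Lemma normr_Qfun_le s a : `|Qfun P Rew gamma V s a| <= MR + `|gamma| * MV.
Proof.
apply: le_trans (le_normr_Rintegral _ (integrable_integrand (s, a))) _ => //.
rewrite [leRHS](_ : _ = \int[P (s, a)]_(y in setT) M); last first.
  by rewrite Rintegral_cst// prob_kernel/= mulr1.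
apply: le_Rintegral => //; first exact: integrable_norm.
by apply: bounded_measurable_integrable; rewrite ?prob_kernel ?ltry//;
   exact: bounded_measurable_cst.
Qed.

(* the integrand is shifted by M to make it nonnegative, so that the
   measurability of integrals against a finite kernel applies *)
Lemma measurable_Qfun s : measurable_fun setT (Qfun P Rew gamma V s).
Proof.
have shiftE x : \int[P x]_(y in setT) integrand (x, y) =
    fine (\int[P x]_(y in setT) (integrand (x, y) + M)%:E)%E - M.
  rewrite -[fine _]/(\int[P x]_(y in setT) (integrand (x, y) + M)).
  rewrite RintegralD//; last first.
    by apply: bounded_measurable_integrable; rewrite ?prob_kernel ?ltry//;
       exact: bounded_measurable_cst.
  by rewrite Rintegral_cst// prob_kernel/= mulr1 addrK.
rewrite (_ : Qfun P Rew gamma V s = fun a => fine (\int[P (s, a)]_(y in setT)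
    (integrand ((s, a), y) + M)%:E)%E - M); last first.
  by apply/funext => a; exact: (shiftE (s, a)).
apply: measurable_funB => //; apply: measurableT_comp => //.
have mI := @measurable_fun_integral_finite_kernel _ _ (S * R)%type S R
  (fun xy => (integrand xy + M)%:E) P.
apply: (measurableT_comp (mI _ _)); last exact: pair1_measurable.
- by move=> z; rewrite lee_fin; have /ler_normlP[] := integrandM z; lra.
- by apply/measurable_EFinP; apply: measurable_funD.
Qed.

End Qfun.

Section density_mean.
Context (R : realType) (A : set R).
Hypothesis mA : measurable A.
Local Notation leb := (@lebesgue_measure R).

Definition dmean (p g : R -> R) : R := \int[leb]_(a in A) (g a * p a).

(* [objective P Rew gamma mu A V s] unfolds to this with [Q := Qfun P Rew gamma V s]. *)
Definition regularized_value (Q : R -> R) (mu : R) (q : R -> R) : R :=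
  \int[leb]_(a in A) (Q a * q a + mu * (q a - q a ^+ 2)).

Lemma regularized_valueE Q mu p :
  regularized_value Q mu p = dmean p (fun a => Q a + mu - mu * p a).
Proof. by apply: eq_Rintegral => a _; ring. Qed.

Lemma eq_dmean p f g : (forall a, A a -> f a = g a) -> dmean p f = dmean p g.
Proof. by move=> fg; apply: eq_Rintegral => a /[!inE] Aa; rewrite fg. Qed.

Variables (C : R) (p : R -> R).
Hypothesis dp : density_on A C p.

Lemma density_ge0 a : A a -> 0 <= p a.
Proof. by case: dp => _ /(_ a) pC _ /pC /andP[]. Qed.

Lemma density_le a : A a -> p a <= C.
Proof. by case: dp => _ /(_ a) pC _ /pC /andP[]. Qed.

Lemma bounded_measurable_density : bounded_measurable A p.
Proof.
case: dp => mp _ _; split => //; exists `|C| => a Aa.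
by rewrite ger0_norm ?density_ge0//; exact: le_trans (density_le Aa) (ler_norm _).
Qed.

Lemma density_integrable : leb.-integrable A (EFin \o p).
Proof.
case: dp => mp _ p1; apply/integrableP; split; first exact/measurable_EFinP.
under eq_integral => a /[!inE] Aa do rewrite /= ger0_norm ?density_ge0//.
by rewrite p1 ltry.
Qed.

Lemma dmean_integrable g : bounded_measurable A g ->
  leb.-integrable A (EFin \o (fun a => g a * p a)).
Proof.
move=> [mg [M gM]].
have := integrableMr (mu := leb) mA mg (bounded_near_le gM) density_integrable.
by apply: eq_integrable => // a _ /=; rewrite EFinM.
Qed.

Lemma integral_density_mul g : bounded_measurable A g ->
  (\int[leb]_(a in A) (p a * g a)%:E)%E = (dmean p g)%:E.
Proof.
move=> bg; rewrite /dmean /Rintegral fineK; last first.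
  exact: integrable_fin_num (dmean_integrable bg).
by apply: eq_integral => a _; rewrite mulrC.
Qed.

Lemma dmeanD f g : bounded_measurable A f -> bounded_measurable A g ->
  dmean p (fun a => f a + g a) = dmean p f + dmean p g.
Proof.
move=> bf bg; rewrite /dmean -RintegralD ?dmean_integrable//.
by apply: eq_Rintegral => a _; rewrite mulrDl.
Qed.

Lemma dmeanZ k f : bounded_measurable A f ->
  dmean p (fun a => k * f a) = k * dmean p f.
Proof.
move=> bf; rewrite /dmean -RintegralZl ?dmean_integrable//.
by apply: eq_Rintegral => a _; rewrite mulrA.
Qed.

Lemma dmeanB f g : bounded_measurable A f -> bounded_measurable A g ->
  dmean p (fun a => f a - g a) = dmean p f - dmean p g.
Proof.
move=> bf bg; transitivity (dmean p (fun a => f a + (-1) * g a)).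
  by apply: eq_dmean => a _; ring.
by rewrite dmeanD ?dmeanZ ?mulN1r//; solve_bounded_measurable.
Qed.

Lemma dmean1 : dmean p (fun=> 1) = 1.
Proof.
rewrite /dmean; under eq_Rintegral do rewrite mul1r.
by case: dp => _ _; rewrite /Rintegral => ->.
Qed.

Lemma ler_dmean f g : bounded_measurable A f -> bounded_measurable A g ->
  (forall a, A a -> f a <= g a) -> dmean p f <= dmean p g.
Proof.
move=> bf bg fg; apply: le_Rintegral; rewrite ?dmean_integrable// => a Aa.
by apply: ler_wpM2r; [exact: density_ge0 | exact: fg].
Qed.

Lemma dmean_ge0 f : (forall a, A a -> 0 <= f a) -> 0 <= dmean p f.
Proof. by move=> f0; apply: Rintegral_ge0 => a Aa; rewrite mulr_ge0 ?f0 ?density_ge0. Qed.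

Lemma dmean_eq0_ae f : bounded_measurable A f -> (forall a, A a -> 0 <= f a) ->
  dmean p f = 0 -> {ae leb, forall a, A a -> f a * p a = 0}.
Proof.
move=> bf f0; apply: Rintegral_eq0_ae; rewrite ?dmean_integrable// => a Aa.
by rewrite mulr_ge0 ?f0 ?density_ge0.
Qed.

End density_mean.

Lemma perturbation_gap_le0 (R : realFieldType) (t mu c D Y : R) :
  0 < t -> 0 <= mu -> t * (mu * c) < 1 -> Y <= c * D ->
  t * D - mu * t ^+ 2 * Y <= 0 -> D <= 0.
Proof.
move=> t0 mu0 tc Yc gap.
have muY : mu * t ^+ 2 * Y <= mu * t ^+ 2 * (c * D).
  by rewrite ler_wpM2l // mulr_ge0 // sqr_ge0.
have : t * (1 - t * (mu * c)) * D <= 0.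
  by rewrite (_ : _ * D = t * D - mu * t ^+ 2 * (c * D)); [lra | ring].
by rewrite pmulr_rle0 // mulr_gt0 // subr_gt0.
Qed.

Section stationarity.
Context (R : realType) (A : set R) (C mu : R) (Q p : R -> R).
Hypotheses (mA : measurable A) (bQ : bounded_measurable A Q).
Hypothesis dp : density_on A C p.
Local Notation leb := (@lebesgue_measure R).

Let bp : bounded_measurable A p := bounded_measurable_density dp.

Lemma perturbed_density (phi : R -> R) t :
  bounded_measurable A phi -> dmean A p (fun a => (C - p a) * phi a) = 0 ->
  (forall a, A a -> t * `|(C - p a) * phi a| <= 1 /\ t * `|p a * phi a| <= 1) ->
  0 <= t -> density_on A C (fun a => p a * (1 + t * ((C - p a) * phi a))).
Proof.
move=> bphi mean0 tsmall t0.
have [mq _] : bounded_measurable A (fun a => p a * (1 + t * ((C - p a) * phi a))).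
  by solve_bounded_measurable.
split => // [a Aa|].
- have [tpsi tpphi] := tsmall a Aa.
  have /ler_normlP[psi1 _] : `|t * ((C - p a) * phi a)| <= 1 by rewrite normrM ger0_norm.
  have /ler_normlP[_ pphi1] : `|t * (p a * phi a)| <= 1 by rewrite normrM ger0_norm.
  have := density_ge0 dp Aa; have := density_le dp Aa => pC p0.
  apply/andP; split; first by rewrite mulr_ge0 //; lra.
  rewrite -subr_ge0.
  have -> : C - p a * (1 + t * ((C - p a) * phi a)) = (C - p a) * (1 - t * (p a * phi a)).
    by ring.
  by rewrite mulr_ge0 // subr_ge0.
- rewrite (integral_density_mul mA dp) //; last by solve_bounded_measurable.
  rewrite (dmeanD mA dp) ?(dmeanZ mA dp) ?mean0 ?(dmean1 dp) ?mulr0 ?addr0 //;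
    by solve_bounded_measurable.
Qed.

Lemma regularized_value_perturbed psi t : bounded_measurable A psi ->
  regularized_value A Q mu (fun a => p a * (1 + t * psi a)) - regularized_value A Q mu p =
  t * dmean A p (fun a => psi a * (Q a - 2 * mu * p a + mu))
  - mu * t ^+ 2 * dmean A p (fun a => p a * psi a ^+ 2).
Proof.
move=> bpsi.
have -> : regularized_value A Q mu (fun a => p a * (1 + t * psi a)) =
    dmean A p (fun a => (1 + t * psi a) * (Q a + mu) - mu * p a * (1 + t * psi a) ^+ 2).
  by apply: eq_Rintegral => a _; ring.
rewrite regularized_valueE -!(dmeanZ mA dp) -?(dmeanB mA dp) //;
  try by solve_bounded_measurable.
by apply: eq_dmean => a _; ring.
Qed.

Hypothesis mu0 : 0 < mu.
Hypothesis opt :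
  forall q, density_on A C q -> regularized_value A Q mu q <= regularized_value A Q mu p.

Let Cp_ge0 a : A a -> 0 <= C - p a.
Proof. by move=> Aa; rewrite subr_ge0 (density_le dp). Qed.

Lemma stationary_gap_eq0 m :
  dmean A p (fun a => (C - p a) * (Q a - 2 * mu * p a - m)) = 0 ->
  dmean A p (fun a => (C - p a) * (Q a - 2 * mu * p a - m) ^+ 2) = 0.
Proof.
set phi := fun a => Q a - 2 * mu * p a - m => psi_mean0.
have bphi : bounded_measurable A phi by solve_bounded_measurable.
set D := dmean A p _.
have D_ge0 : 0 <= D by apply: (dmean_ge0 dp) => a Aa; rewrite mulr_ge0 ?Cp_ge0 ?sqr_ge0.
have [[_ [B1 B1M]] [_ [B2 B2M]]] : bounded_measurable A (fun a => (C - p a) * phi a) /\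
    bounded_measurable A (fun a => p a * phi a) by split; solve_bounded_measurable.
set t := (`|B1| + `|B2| + mu * C ^+ 2 + 1)^-1.
have muC_ge0 : 0 <= mu * C ^+ 2 by rewrite mulr_ge0 ?sqr_ge0 // ltW.
have tE : t * (`|B1| + `|B2| + mu * C ^+ 2 + 1) = 1.
  by rewrite mulVf // gt_eqF // ltr_wpDl // addr_ge0.
have t0 : 0 < t by rewrite invr_gt0 ltr_wpDl // addr_ge0.
have tsmall a : A a -> t * `|(C - p a) * phi a| <= 1 /\ t * `|p a * phi a| <= 1.
  move=> Aa; have := B1M a Aa; have := B2M a Aa.
  have := ler_norm B1; have := ler_norm B2; have := normr_ge0 B1; have := normr_ge0 B2.
  by split; rewrite -tE ler_wpM2l ?(ltW t0) //; lra.
have tmuC : t * (mu * C ^+ 2) < 1.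
  rewrite -tE ltr_pM2l //; have := normr_ge0 B1; have := normr_ge0 B2; lra.
have := opt (perturbed_density bphi psi_mean0 tsmall (ltW t0)).
rewrite -subr_le0 regularized_value_perturbed; last by solve_bounded_measurable.
have -> : dmean A p (fun a => (C - p a) * phi a * (Q a - 2 * mu * p a + mu)) = D.
  rewrite -[RHS]addr0 -(mulr0 (m + mu)) -psi_mean0 -(dmeanZ mA dp) -?(dmeanD mA dp) //;
    try by solve_bounded_measurable.
  by apply: eq_dmean => a _; rewrite /phi; ring.
move=> gap; apply/eqP; rewrite eq_le D_ge0 andbT.
apply: perturbation_gap_le0 (ltW mu0) tmuC _ gap => //.
rewrite -(dmeanZ mA dp); try by solve_bounded_measurable.
apply: (ler_dmean mA dp) => //; try by solve_bounded_measurable.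
move=> a Aa; have := density_ge0 dp Aa; have := density_le dp Aa => pC p0.
have -> : p a * ((C - p a) * phi a) ^+ 2 = p a * (C - p a) * ((C - p a) * phi a ^+ 2).
  by ring.
by apply: ler_wpM2r; [rewrite mulr_ge0 ?Cp_ge0 ?sqr_ge0 | nra].
Qed.

Lemma stationary_density : exists m, {ae leb, forall a, A a ->
  p a * (C - p a) * (Q a - 2 * mu * p a - m) ^+ 2 = 0}.
Proof.
have bCp : bounded_measurable A (fun a => C - p a) by solve_bounded_measurable.
set w := dmean A p (fun a => C - p a).
have [w0|w_neq0] := eqVneq w 0.
  exists 0; apply: filterS (dmean_eq0_ae mA dp bCp Cp_ge0 w0) => a wp0 Aa.
  by rewrite [p a * _]mulrC wp0 ?mul0r.
set m := dmean A p (fun a => (C - p a) * (Q a - 2 * mu * p a)) / w.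
have mean0 : dmean A p (fun a => (C - p a) * (Q a - 2 * mu * p a - m)) = 0.
  transitivity (dmean A p (fun a => (C - p a) * (Q a - 2 * mu * p a)) - m * w).
    rewrite -(dmeanZ mA dp) -?(dmeanB mA dp) //; try by solve_bounded_measurable.
    by apply: eq_dmean => a _; ring.
  by rewrite /m divfK // subrr.
have sq_ge0 a : A a -> 0 <= (C - p a) * (Q a - 2 * mu * p a - m) ^+ 2.
  by move=> Aa; rewrite mulr_ge0 ?Cp_ge0 ?sqr_ge0.
have bsq : bounded_measurable A (fun a => (C - p a) * (Q a - 2 * mu * p a - m) ^+ 2).
  by solve_bounded_measurable.
exists m; apply: filterS (dmean_eq0_ae mA dp bsq sq_ge0 (stationary_gap_eq0 mean0)).
by move=> a gap0 Aa; rewrite -[RHS](gap0 Aa); ring.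
Qed.

End stationarity.

Lemma lagrange_value_closed_form (R : realFieldType) (mu m IQ I2 sigma : R) :
  mu != 0 -> m * sigma = IQ - 2 * mu ->
  (4 * mu)^-1 * I2 + 2^-1 * IQ + (- (m ^+ 2 / (4 * mu)) - m / 2) * sigma =
  mu - (4 * mu)^-1 * ((IQ - 2 * mu) ^+ 2 / sigma - I2).
Proof.
move=> mu0 m_sigma.
have -> : (IQ - 2 * mu) ^+ 2 / sigma = m ^+ 2 * sigma.
  rewrite -m_sigma; have [->|sigma0] := eqVneq sigma 0; first by rewrite invr0 !mulr0.
  by field.
have -> : IQ = m * sigma + 2 * mu by rewrite m_sigma; ring.
by field.
Qed.

Section closed_form.
Context (R : realType) (A : set R) (C mu m : R) (Q p : R -> R).
Hypotheses (mA : measurable A) (bQ : bounded_measurable A Q) (mu0 : 0 < mu).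
Hypothesis dp : density_on A C p.
Local Notation leb := (@lebesgue_measure R).
Hypothesis stationary : {ae leb, forall a, A a ->
  p a * (C - p a) * (Q a - 2 * mu * p a - m) ^+ 2 = 0}.
Hypothesis top_null : leb [set a | A a /\ p a = C] = 0%E.
Local Notation W := [set a | A a /\ 0 < p a < C].
Hypothesis W_finite : (leb W < +oo)%E.

Let mu_neq0 : mu != 0. Proof. by rewrite gt_eqF. Qed.
Let bp : bounded_measurable A p := bounded_measurable_density dp.
Let mp : measurable_fun A p := bp.1.
Let WA : W `<=` A. Proof. by move=> a []. Qed.

Let measurable_interior : measurable W.
Proof.
rewrite (_ : W = A `&` p @^-1` `]0, C[); first exact: mp.
by apply/seteqP; split => a /=; rewrite in_itv.
Qed.

Let density_eq0_ae_off_interior : {ae leb, forall a, (A `\` W) a -> p a = 0}.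
Proof.
have top_negligible : {ae leb, forall a, ~ (A a /\ p a = C)}.
  exists [set a | A a /\ p a = C]; split => [||a /= /contrapT //].
  - by rewrite (_ : [set _ | _] = A `&` p @^-1` [set C]) //; exact: mp.
  - exact: top_null.
apply: filterS top_negligible => a not_top [Aa not_W].
have /andP[p0 pC] : 0 <= p a <= C by rewrite (density_ge0 dp) ?(density_le dp).
have [//|p_neq0] := eqVneq (p a) 0; have [pCE|p_neqC] := eqVneq (p a) C.
  by case: not_top.
by case: not_W; split; rewrite // !lt_neqAle eq_sym p_neq0 p_neqC p0 pC.
Qed.

Let density_interior_ae : {ae leb, forall a, W a -> p a = (Q a - m) / (2 * mu)}.
Proof.
apply: filterS stationary => a st [Aa /andP[p0 pC]].
have pCp_neq0 : p a * (C - p a) != 0 by rewrite mulf_neq0 ?gt_eqF ?subr_gt0.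
move/eqP: (st Aa); rewrite mulf_eq0 (negbTE pCp_neq0) sqrf_eq0 => /eqP st0.
have -> : Q a - m = 2 * mu * p a by rewrite -[LHS]subr0 -st0; ring.
by rewrite mulrAC divff ?mul1r // mulf_neq0 ?gt_eqF.
Qed.

Let dmean_interior g : bounded_measurable A g ->
  dmean A p g = \int[leb]_(a in W) (g a * p a).
Proof.
move=> bg; have -> : dmean A p g = \int[leb]_(a in (A `\` W) `|` W) (g a * p a).
  by rewrite setDKU.
rewrite Rintegral_setU //; last 3 first.
- exact: measurableD.
- by rewrite setDKU //; exact: (dmean_integrable mA dp).
- by apply/disj_set2P; rewrite setDKI.
have [mgp _] : bounded_measurable A (fun a => g a * p a) by solve_bounded_measurable.
have mAW : measurable (A `\` W) by exact: measurableD.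
rewrite (@ae_eq_Rintegral _ _ _ leb (A `\` W) _ (fun=> 0)) //.
- by rewrite Rintegral_cst // mul0r add0r.
- by apply: measurable_funS mgp => //; exact: subDsetl.
- by apply: filterS density_eq0_ae_off_interior => a p0 AWa; rewrite p0 ?mulr0.
Qed.

Let bQW : bounded_measurable W Q. Proof. exact: bounded_measurableS bQ. Qed.
Let bpW : bounded_measurable W p. Proof. exact: bounded_measurableS bp. Qed.

Let interior_mass_balance :
  m * fine (leb W) = \int[leb]_(a in W) Q a - 2 * mu.
Proof.
have : 1 = 0 * \int[leb]_(a in W) Q a ^+ 2 + (2 * mu)^-1 * \int[leb]_(a in W) Q a
    + (- (m / (2 * mu))) * fine (leb W).
  rewrite -Rintegral_quadratic //; transitivity (dmean A p (fun=> 1)).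
    by rewrite (dmean1 dp).
  rewrite dmean_interior; last by solve_bounded_measurable.
  apply: ae_eq_Rintegral => //;
    try by apply: bounded_measurable_measurable; solve_bounded_measurable.
  by apply: filterS density_interior_ae => a pE Wa; rewrite pE //; field.
rewrite mul0r add0r => mass.
have -> : \int[leb]_(a in W) Q a = 2 * mu * ((2 * mu)^-1 * \int[leb]_(a in W) Q a).
  by rewrite mulrA divff ?mul1r // mulf_neq0.
have -> : (2 * mu)^-1 * \int[leb]_(a in W) Q a = 1 + m / (2 * mu) * fine (leb W).
  by move: mass; lra.
by field.
Qed.

Lemma regularized_value_closed_form : regularized_value A Q mu p =
  mu - (4 * mu)^-1 * ((\int[leb]_(a in W) Q a - 2 * mu) ^+ 2 / fine (leb W)
                      - \int[leb]_(a in W) Q a ^+ 2).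
Proof.
rewrite regularized_valueE dmean_interior; last by solve_bounded_measurable.
rewrite (@ae_eq_Rintegral _ _ _ leb W _ (fun a => (4 * mu)^-1 * Q a ^+ 2 + 2^-1 * Q a
    + (- (m ^+ 2 / (4 * mu)) - m / 2))) //.
- rewrite Rintegral_quadratic //.
  exact: lagrange_value_closed_form.
- by apply: bounded_measurable_measurable; solve_bounded_measurable.
- by apply: bounded_measurable_measurable; solve_bounded_measurable.
- by apply: filterS density_interior_ae => a pE Wa; rewrite pE //; field.
Qed.

End closed_form.

Lemma regularized_value_ub (R : realType) (A : set R) (C mu : R) (Q : R -> R) :
  measurable A -> bounded_measurable A Q -> 0 <= mu ->
  exists M, forall q, density_on A C q -> regularized_value A Q mu q <= M.
Proof.
move=> mA bQ mu0; have [_ [M QM]] := bQ; exists (M + mu) => q dq.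
have bq := bounded_measurable_density dq.
rewrite regularized_valueE -[M + mu]mulr1 -(dmean1 dq) -(dmeanZ mA dq);
  last by solve_bounded_measurable.
apply: (ler_dmean mA dq) => [||a Aa]; try by solve_bounded_measurable.
have := QM a Aa; have := density_ge0 dq Aa; rewrite ler_norml; nra.
Qed.

Lemma PiC_cst d (S : measurableType d) (R : realType) (A : set R) (C : R) (q : R -> R) :
  measurable A -> density_on A C q -> PiC A C (fun _ : S => q).
Proof.
move=> mA dq; split => //; have [mq _ _] := dq.
apply: (measurable_comp (F := A)) => //.
- by move=> x [[x1 x2] [_ Ax2]] <-.
- exact: (measurable_funS measurableT (fun _ _ => I) measurable_snd).
Qed.

Lemma objective_le_Bmu d (S : measurableType d) (R : realType)
    (P : R.-pker (S * R)%type ~> S) Rew gamma mu A C V (s : S) (q : R -> R) :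
  measurable A -> 0 <= mu -> bounded_measurable A (Qfun P Rew gamma V s) ->
  density_on A C q -> objective P Rew gamma mu A V s q <= Bmu P Rew gamma mu A C V s.
Proof.
move=> mA mu0 bQ dq; have [M valueM] := regularized_value_ub C mA bQ mu0.
apply: sup_upper_bound; last by exists (fun=> q) => //; exact: PiC_cst.
split; first by exists (objective P Rew gamma mu A V s q), (fun=> q); first exact: PiC_cst.
by exists M => _ [pi [_ dpi] <-]; exact: valueM.
Qed.

Unset Implicit Arguments. Set Strict Implicit.

Theorem corollaryS1 (d : measure_display) (S : measurableType d) (R : realType)
  (A : set R) (P : R.-pker (S * R)%type ~> S) (Rew : S -> S -> R -> R)
  (gamma mu C : R) (Vstar : S -> R) (pistar : S -> R -> R) (s : S) :
  measurable A ->
  measurable_fun setT (fun x : S * (S * R) => Rew x.1 x.2.1 x.2.2) ->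
  (exists M : R, forall s' s0 a, `|Rew s' s0 a| <= M) ->
  0 <= gamma < 1 ->
  0 < mu ->
  (* V*_mu : a bounded (measurable) fixed point of B_mu *)
  measurable_fun setT Vstar ->
  (exists M : R, forall s0, `|Vstar s0| <= M) ->
  (forall s0, Bmu P Rew gamma mu A C Vstar s0 = Vstar s0) ->
  (* pi*_mu : the maximizing policy, bounded by C *)
  PiC A C pistar ->
  (forall s0, objective P Rew gamma mu A Vstar s0 (pistar s0)
              = Bmu P Rew gamma mu A C Vstar s0) ->
  (forall a, A a -> pistar s a <= C) ->
  @lebesgue_measure R [set a | A a /\ pistar s a = C] = 0%E ->
  (@lebesgue_measure R [set a | A a /\ (0 < pistar s a < C)%R] < +oo)%E ->
  let W := [set a | A a /\ 0 < pistar s a < C] in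
  let Q := Qfun P Rew gamma Vstar s in
  Bmu P Rew gamma mu A C Vstar s =
    mu - (4 * mu)^-1 *
      ((Rintegral (@lebesgue_measure R) W Q - 2 * mu) ^+ 2
         / fine (@lebesgue_measure R W)
       - Rintegral (@lebesgue_measure R) W (fun a => Q a ^+ 2)).
Proof.
move=> mA mRew [MR RewM] _ mu0 mV [MV VM] _ pistar_PiC pistar_opt _ top_null W_finite W Q.
have bQ : bounded_measurable A Q.
  split; first exact: measurable_funS (measurable_Qfun P _ mRew mV RewM VM s).
  by exists (MR + `|gamma| * MV) => a _; exact: normr_Qfun_le.
have dp : density_on A C (pistar s) by case: pistar_PiC => _; apply.
have opt q : density_on A C q ->
    regularized_value A Q mu q <= regularized_value A Q mu (pistar s).
  by move=> dq; rewrite [leRHS]pistar_opt; exact: objective_le_Bmu (ltW mu0) bQ dq.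
have [m stationary] := stationary_density mA bQ dp mu0 opt.
rewrite -pistar_opt.
exact: (regularized_value_closed_form mA bQ mu0 dp stationary top_null W_finite).
Qed.
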